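(* Let $X\in\mathbb{R}^p$ have distribution function $F$. Let $f(\cdot;\boldsymbol{\mu},\boldsymbol{\Sigma})$ be a family of probability densities on $\mathbb{R}^p$ indexed by $\boldsymbol{\mu}\in\mathbb{R}^p$ and positive definite $\boldsymbol{\Sigma}\in\mathbb{R}^{p\times p}$, and let $\phi(\cdot;\boldsymbol{\mu},\boldsymbol{\Sigma})$ denote the $N_p(\boldsymbol{\mu},\boldsymbol{\Sigma})$ density. Let $\mathcal{M}$ be a set of cluster configurations; each $m\in\mathcal{M}$ is a parameter $\boldsymbol{\theta}^{(m)}=\{(\pi_k^{(m)},\boldsymbol{\mu}_k^{(m)},\boldsymbol{\Sigma}_k^{(m)})\}_{k=1}^{K(\boldsymbol{\theta}^{(m)})}$ with $\pi_k^{(m)}>0$, $\boldsymbol{\mu}_k^{(m)}\in\mathbb{R}^p$, $\boldsymbol{\Sigma}_k^{(m)}$ positive definite. For such $\boldsymbol{\theta}$ define the quadratic score $\mathrm{qs}(\mathbf{x};\boldsymbol{\theta}_k)=\log\pi_k-\tfrac12\log\det\boldsymbol{\Sigma}_k-\tfrac12(\mathbf{x}-\boldsymbol{\mu}_k)^\top\boldsymbol{\Sigma}_k^{-1}(\mathbf{x}-\boldsymbol{\mu}_k)$, the sets $Q_k(\boldsymbol{\theta})=\{\mathbf{x}:\mathrm{qs}(\mathbf{x};\boldsymbol{\theta}_k)=\max_{1\le j\le K(\boldsymbol{\theta})}\mathrm{qs}(\mathbf{x};\boldsymbol{\theta}_j)\}$ (assumed to form a partition of $\mathbb{R}^p$),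 and $$L(\boldsymbol{\theta})=\sum_{k=1}^{K(\boldsymbol{\theta})}\int_{Q_k(\boldsymbol{\theta})}\log\big(\pi_k f(\mathbf{x};\boldsymbol{\mu}_k,\boldsymbol{\Sigma}_k)\big)\,dF,\qquad H(\boldsymbol{\theta})=\sum_{k=1}^{K(\boldsymbol{\theta})}\int_{Q_k(\boldsymbol{\theta})}\mathrm{qs}(\mathbf{x};\boldsymbol{\theta}_k)\,dF.$$ Assume all these integrals exist and that (C3) $\inf_{m\in\mathcal{M}}\Big\{\int_{Q_k(\boldsymbol{\theta}^{(m)})}\log f(\mathbf{x};\boldsymbol{\mu}_k^{(m)},\boldsymbol{\Sigma}_k^{(m)})\,dF-\int_{Q_k(\boldsymbol{\theta}^{(m)})}\log\phi(\mathbf{x};\boldsymbol{\mu}_k^{(m)},\boldsymbol{\Sigma}_k^{(m)})\,dF\Big\}\ge 0$ for all $k=1,\dots,K(\boldsymbol{\theta}^{(m)})$. Then for every $m\in\mathcal{M}$, $$H(\boldsymbol{\theta}^{(m)})=c+L(\boldsymbol{\theta}^{(m)})-\Lambda(\boldsymbol{\theta}^{(m)}),$$ where $c$ is a positive constant (not depending on $m$) and $$\Lambda(\boldsymbol{\theta}^{(m)})=\sum_{k=1}^{K(\boldsymbol{\theta}^{(m)})}\int_{Q_k(\boldsymbol{\theta}^{(m)})}\log\!\left(\frac{f(\mathbf{x};\boldsymbol{\mu}_k^{(m)},\boldsymbol{\Sigma}_k^{(m)})}{\phi(\mathbf{x};\boldsymbol{\mu}_k^{(m)},\boldsymbol{\Sigma}_k^{(m)})}\right)dF\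 \ge 0.$$
   Context: $K(\boldsymbol{\theta})$ denotes the number of groups described by a configuration $\boldsymbol{\theta}$; $\boldsymbol{\theta}_k=(\pi_k,\boldsymbol{\mu}_k,\boldsymbol{\Sigma}_k)$ represents size, center and scatter of the $k$-th cluster. $H$ is the population hard score criterion and $L$ the population partition log-likelihood-type criterion. *)

From HB Require Import structures.
From mathcomp Require Import all_boot all_order all_algebra.
From mathcomp Require Import all_classical all_reals all_analysis.
Set Implicit Arguments. Unset Strict Implicit. Unset Printing Implicit Defensive.
Import Order.TTheory GRing.Theory Num.Theory.
Import numFieldNormedType.Exports.
Local Open Scope classical_set_scope.
Local Open Scope ring_scope.

Definition Rp (R : realType) (p : nat) :=
  g_sigma_algebraType (@open 'rV[R]_p).

Definition posdef (R : realType) (p : nat) (S : 'M[R]_p) : Prop :=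
  S^T = S /\ forall v : 'rV[R]_p, v != 0 -> 0 < (v *m S *m v^T) 0 0.

Definition mahal (R : realType) (p : nat) (x mu : 'rV[R]_p) (S : 'M[R]_p) : R :=
  ((x - mu) *m invmx S *m (x - mu)^T) 0 0.

Definition gauss_pdf (R : realType) (p : nat) (x mu : 'rV[R]_p) (S : 'M[R]_p) : R :=
  expR (- (1/2) * mahal x mu S) / Num.sqrt ((2 * pi) ^+ p * \det S).

Record config (R : realType) (p : nat) := Config {
  K : nat;
  cpi : 'I_K -> R;
  cmu : 'I_K -> 'rV[R]_p;
  cSigma : 'I_K -> 'M[R]_p }.

Definition valid_config (R : realType) (p : nat) (th : config R p) : Prop :=
  forall k : 'I_(K th), 0 < cpi k /\ posdef (cSigma k).

Definition qs (R : realType) (p : nat) (th : config R p) (k : 'I_(K th))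
    (x : 'rV[R]_p) : R :=
  ln (cpi k) - (1/2) * ln (\det (cSigma k)) - (1/2) * mahal x (cmu k) (cSigma k).

Definition Qset (R : realType) (p : nat) (th : config R p) (k : 'I_(K th)) :
    set (Rp R p) :=
  [set x : Rp R p | forall j : 'I_(K th), qs j x <= qs k x].

Definition is_lebesgue_Rp (R : realType) (p : nat)
    (leb : {measure set (Rp R p) -> \bar R}) : Prop :=
  forall a b : 'rV[R]_p, (forall i, a 0 i <= b 0 i) ->
    leb [set x : Rp R p | forall i, a 0 i < (x : 'rV[R]_p) 0 i <= b 0 i]
    = (\prod_(i < p) (b 0 i - a 0 i))%:E.

Local Open Scope ereal_scope.

Definition Lcrit (R : realType) (p : nat) (F : probability (Rp R p) R)
    (f : 'rV[R]_p -> 'rV[R]_p -> 'M[R]_p -> R) (th : config R p) : \bar R :=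
  \sum_(k < K th) \int[F]_(x in Qset k)
     (ln (cpi k * f x (cmu k) (cSigma k)))%:E.

Definition Hcrit (R : realType) (p : nat) (F : probability (Rp R p) R)
    (th : config R p) : \bar R :=
  \sum_(k < K th) \int[F]_(x in Qset k) (qs k x)%:E.

Definition Lambda (R : realType) (p : nat) (F : probability (Rp R p) R)
    (f : 'rV[R]_p -> 'rV[R]_p -> 'M[R]_p -> R) (th : config R p) : \bar R :=
  \sum_(k < K th) \int[F]_(x in Qset k)
     (ln (f x (cmu k) (cSigma k) / gauss_pdf x (cmu k) (cSigma k)))%:E.

(* With c = (p/2) log(2 pi) from the Gaussian normalising constant,
     log phi(x; mu_k, Sigma_k) = qs(x; theta_k) - log pi_k - c,
   so wherever f > 0 we have pointwise
     qs(x; theta_k) = log(pi_k f) - log(f / phi) + c.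
   Integrating over Q_k and summing over k gives H = L - Lambda + c sum_k F(Q_k),
   and sum_k F(Q_k) = 1 because the Q_k partition R^p. Each summand of Lambda
   equals int log f - int log phi over Q_k, which (C3) bounds below by 0.
   The logarithm of det Sigma_k makes sense because a positive definite S has
   det S > 0: char_poly (-S) is monic, has no nonnegative root, and takes the
   value det S at 0, so by the intermediate value theorem det S cannot be <= 0. *)

From HB Require Import structures.
From mathcomp Require Import all_boot all_order all_algebra.
From mathcomp Require Import all_classical all_reals all_analysis.
From mathcomp Require Import lra polyrcf measurable_realfun.
Import Order.TTheory GRing.Theory Num.Theory.
Import numFieldNormedType.Exports.
Local Open Scope classical_set_scope.
Local Open Scope ring_scope.

Lemma char_polyN_horner0 (R : comNzRingType) n (A : 'M[R]_n) :
  (char_poly (- A)).[0] = \det A.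
Proof.
by rewrite horner_coef0 char_poly_det -scaleN1r detZ mulrA -expr2 sqrr_sign mul1r.
Qed.

Lemma monic_root_ge0 (R : rcfType) (P : {poly R}) :
  P \is monic -> P.[0] <= 0 -> exists2 x, 0 <= x & root P x.
Proof.
move=> /monicP P_monic P0_le0.
have [b Pb] := @poly_pinfty_gt_lc R P ltac:(by rewrite P_monic).
rewrite P_monic in Pb.
have [||x /andP[x_ge0 _] Px] := @poly_ivt R P 0 (Num.max b 0); last by exists x.
- by rewrite le_max lexx orbT.
- by rewrite P0_le0 /=; apply: le_trans ler01 (Pb _ _); rewrite le_max lexx.
Qed.

Lemma quad_pos_eigenvalueN (R : realFieldType) n (S : 'M[R]_n) (x : R) :
  (forall v : 'rV[R]_n, v != 0 -> 0 < (v *m S *m v^T) 0 0) ->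
  0 <= x -> ~~ eigenvalue (- S) x.
Proof.
move=> Spos x_ge0; apply/eigenvalueP => -[v vSx v_neq0].
have vv_ge0 : 0 <= (v *m v^T) 0 0.
  by rewrite mxE; apply: sumr_ge0 => i _; rewrite mxE -expr2 sqr_ge0.
have := Spos v v_neq0.
rewrite -[S]opprK mulmxN vSx mulNmx -scalemxAl; move: vv_ge0.
set vv := v *m v^T; rewrite !mxE; nra.
Qed.

Lemma quad_pos_det_gt0 (R : rcfType) n (S : 'M[R]_n) :
  (forall v : 'rV[R]_n, v != 0 -> 0 < (v *m S *m v^T) 0 0) -> 0 < \det S.
Proof.
move=> Spos; rewrite ltNge; apply/negP => detS_le0.
have [|x x_ge0] := @monic_root_ge0 R (char_poly (- S)) (char_poly_monic _).
  by rewrite char_polyN_horner0.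
by rewrite -eigenvalue_root_char; apply/negP; exact: quad_pos_eigenvalueN.
Qed.

Definition gauss_log_const (R : realType) (p : nat) : R :=
  p%:R / 2 * ln (2 * pi).

Lemma gauss_log_const_gt0 (R : realType) (p : nat) :
  (0 < p)%N -> 0 < gauss_log_const R p.
Proof.
move=> p_gt0; rewrite mulr_gt0 ?divr_gt0 ?ltr0n // ln_gt0 //.
have := pi_ge2 R; lra.
Qed.

Section Gaussian.
Variables (R : realType) (p : nat) (mu : 'rV[R]_p) (S : 'M[R]_p).
Hypothesis S_posdef : posdef S.

Let det_gt0 : 0 < \det S.
Proof. by case: S_posdef => _; exact: quad_pos_det_gt0. Qed.

Let norm_gt0 : 0 < (2 * pi) ^+ p * \det S.
Proof. by rewrite mulr_gt0 // exprn_gt0 // mulr_gt0 // pi_gt0. Qed.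

Lemma gauss_pdf_gt0 x : 0 < gauss_pdf x mu S.
Proof. by rewrite divr_gt0 ?expR_gt0 ?sqrtr_gt0. Qed.

Lemma ln_gauss_pdf x : ln (gauss_pdf x mu S) =
  - (1/2) * mahal x mu S - (1/2) * ln (\det S) - gauss_log_const R p.
Proof.
have two_pi_gt0 : (0 : R) < 2 * pi by rewrite mulr_gt0 // pi_gt0.
have ln_sqrt : ln (Num.sqrt ((2 * pi) ^+ p * \det S))
    = (1/2) * ln ((2 * pi) ^+ p * \det S).
  rewrite -[in RHS](sqr_sqrtr (ltW norm_gt0)) lnXn ?sqrtr_gt0 // -mulr_natl; lra.
rewrite /gauss_pdf ln_div ?posrE ?expR_gt0 ?sqrtr_gt0 // expRK ln_sqrt.
rewrite lnM ?posrE ?exprn_gt0 // lnXn // -(mulr_natl (ln (2 * pi))).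
rewrite /gauss_log_const; lra.
Qed.

End Gaussian.

Lemma qs_lnM_ln_ratio (R : realType) (p : nat) (th : config R p)
    (k : 'I_(K th)) (x : 'rV[R]_p) (y : R) :
  0 < cpi k -> posdef (cSigma k) -> 0 < y ->
  qs k x = ln (cpi k * y) - ln (y / gauss_pdf x (cmu k) (cSigma k))
           + gauss_log_const R p.
Proof.
move=> pi_gt0 S_posdef y_gt0.
rewrite lnM ?posrE // ln_div ?posrE ?gauss_pdf_gt0 // ln_gauss_pdf // /qs; lra.
Qed.

Local Open Scope ereal_scope.

Lemma probability_partition_sum d (T : measurableType d) (R : realType)
    (P : probability T R) n (A : 'I_n -> set T) :
  (forall k, measurable (A k)) -> (forall x, exists! k, A k x) ->
  \sum_(k < n) P (A k) = 1.
Proof.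
move=> mA A_part.
have A_cover : \big[setU/set0]_(k < n) A k = [set: T].
  apply/seteqP; split => // x _; have [k [Akx _]] := A_part x.
  by rewrite (bigD1 k) //=; left.
rewrite -measure_semi_additive_ord //.
- by rewrite A_cover; exact: probability_setT.
- move=> i j _ _ [x [Aix Ajx]]; have [k [_ k_uniq]] := A_part x.
  by rewrite -(k_uniq i Aix) -(k_uniq j Ajx).
- by rewrite A_cover.
Qed.

Lemma ae_eq_integralBDcst d (T : measurableType d) (R : realType)
    (mu : {finite_measure set T -> \bar R}) (D : set T) (f g h : T -> R) (c : R) :
  measurable D -> measurable_fun D f ->
  mu.-integrable D (fun x => (g x)%:E) -> mu.-integrable D (fun x => (h x)%:E) ->
  {ae mu, forall x, D x -> f x = (g x - h x + c)%R} ->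
  \int[mu]_(x in D) (f x)%:E =
    \int[mu]_(x in D) (g x)%:E - \int[mu]_(x in D) (h x)%:E + c%:E * mu D.
Proof.
move=> mD mf ig ih f_ae.
have igh := integrableB mD ig ih.
have ic := finite_measure_integrable_cst mu c mD.
rewrite -(integralB mD ig ih) -(integral_cst mu mD c%:E) -(integralD mD igh ic).
apply: ae_eq_integral => //.
- exact/measurable_EFinP.
- exact: measurable_int (integrableD mD igh ic).
- by apply: filterS f_ae => x fx Dx /=; rewrite fx // EFinD EFinB.
Qed.

Section Criteria.
Variables (R : realType) (p : nat) (F : probability (Rp R p) R)
  (f : 'rV[R]_p -> 'rV[R]_p -> 'M[R]_p -> R) (th : config R p).

Definition integrals_exist : Prop := forall k : 'I_(K th),
  measurable (Qset k) /\
  F.-integrable (Qset k) (fun x => (ln (cpi k * f x (cmu k) (cSigma k)))%:E) /\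
  F.-integrable (Qset k) (fun x => (qs k x)%:E) /\
  F.-integrable (Qset k) (fun x => (ln (f x (cmu k) (cSigma k)))%:E) /\
  F.-integrable (Qset k) (fun x => (ln (gauss_pdf x (cmu k) (cSigma k)))%:E) /\
  F.-integrable (Qset k) (fun x =>
     (ln (f x (cmu k) (cSigma k) / gauss_pdf x (cmu k) (cSigma k)))%:E) /\
  {ae F, forall x, Qset k x -> (0 < f x (cmu k) (cSigma k))%R}.

Hypothesis th_valid : valid_config th.
Hypothesis th_int : integrals_exist.

Lemma integral_ln_ratio (k : 'I_(K th)) :
  \int[F]_(x in Qset k)
     (ln (f x (cmu k) (cSigma k) / gauss_pdf x (cmu k) (cSigma k)))%:E =
  \int[F]_(x in Qset k) (ln (f x (cmu k) (cSigma k)))%:E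
  - \int[F]_(x in Qset k) (ln (gauss_pdf x (cmu k) (cSigma k)))%:E.
Proof.
have [mQ [_ [_ [iF [iG [iB f_ae]]]]]] := th_int k.
have [_ S_posdef] := th_valid k.
rewrite -[RHS]adde0 -(mul0e (F (Qset k))).
apply: ae_eq_integralBDcst => //.
  by apply/measurable_EFinP; exact: measurable_int iB.
apply: filterS f_ae => x fx Qx.
by rewrite addr0 ln_div ?posrE ?gauss_pdf_gt0 ?fx.
Qed.

Lemma integral_qs (k : 'I_(K th)) :
  \int[F]_(x in Qset k) (qs k x)%:E =
  \int[F]_(x in Qset k) (ln (cpi k * f x (cmu k) (cSigma k)))%:E
  - \int[F]_(x in Qset k)
      (ln (f x (cmu k) (cSigma k) / gauss_pdf x (cmu k) (cSigma k)))%:E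
  + (gauss_log_const R p)%:E * F (Qset k).
Proof.
have [mQ [iL [iq [_ [_ [iB f_ae]]]]]] := th_int k.
have [pi_gt0 S_posdef] := th_valid k.
apply: ae_eq_integralBDcst => //.
  by apply/measurable_EFinP; exact: measurable_int iq.
by apply: filterS f_ae => x fx Qx; exact: qs_lnM_ln_ratio (fx Qx).
Qed.

Lemma Hcrit_decomp : (forall x : Rp R p, exists! k : 'I_(K th), Qset k x) ->
  Hcrit F th = (gauss_log_const R p)%:E + Lcrit F f th - Lambda F f th.
Proof.
move=> Q_part.
have Q_meas (k : 'I_(K th)) : measurable (Qset k) by have [] := th_int k.
rewrite /Hcrit /Lcrit /Lambda; under eq_bigr do rewrite integral_qs.
rewrite big_split big_split /= fin_num_sumeN; last first.
  move=> k _; have [mQ [_ [_ [_ [_ [iB _]]]]]] := th_int k.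
  exact: integrable_fin_num iB.
rewrite -ge0_sume_distrr; last by move=> k _; exact: measure_ge0.
by rewrite probability_partition_sum // mule1 [LHS]addeC addeA.
Qed.

End Criteria.

Local Close Scope ereal_scope.

Theorem proposition2 (R : realType) (p : nat) (hp : (0 < p)%N)
  (F : probability (Rp R p) R)
  (f : 'rV[R]_p -> 'rV[R]_p -> 'M[R]_p -> R)
  (M : set (config R p)) :
  (* f(.;mu,Sigma) is a probability density on R^p *)
  (forall leb : {measure set (Rp R p) -> \bar R}, is_lebesgue_Rp leb ->
     forall (mu : 'rV[R]_p) (S : 'M[R]_p), posdef S ->
       (forall x, 0 <= f x mu S) /\
       measurable_fun [set: Rp R p] (fun x : Rp R p => f x mu S) /\
       (\int[leb]_(x in [set: Rp R p]) (f x mu S)%:E = 1)%E) ->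
  (* every configuration in M is a valid parameter *)
  (forall th, M th -> valid_config th) ->
  (* the sets Q_k(theta) form a partition of R^p *)
  (forall th, M th -> forall x : Rp R p, exists! k : 'I_(K th), Qset k x) ->
  (* all the integrals exist *)
  (forall th, M th -> forall k : 'I_(K th),
     measurable (Qset k) /\
     F.-integrable (Qset k) (fun x => (ln (cpi k * f x (cmu k) (cSigma k)))%:E) /\
     F.-integrable (Qset k) (fun x => (qs k x)%:E) /\
     F.-integrable (Qset k) (fun x => (ln (f x (cmu k) (cSigma k)))%:E) /\
     F.-integrable (Qset k) (fun x => (ln (gauss_pdf x (cmu k) (cSigma k)))%:E) /\
     F.-integrable (Qset k) (fun x =>
        (ln (f x (cmu k) (cSigma k) / gauss_pdf x (cmu k) (cSigma k)))%:E) /\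
     (* existence of the integral of log f entails f > 0 F-a.e. on Q_k *)
     {ae F, forall x, Qset k x -> 0 < f x (cmu k) (cSigma k)}) ->
  (* (C3) *)
  (forall k : nat, (0 <= ereal_inf
     [set d | exists th, M th /\ exists k' : 'I_(K th), nat_of_ord k' = k /\
        d = (\int[F]_(x in Qset k') (ln (f x (cmu k') (cSigma k')))%:E
             - \int[F]_(x in Qset k')
                 (ln (gauss_pdf x (cmu k') (cSigma k')))%:E)%E])%E) ->
  exists c : R, 0 < c /\
    forall th, M th ->
      Hcrit F th = (c%:E + Lcrit F f th - Lambda F f th)%E /\
      (0 <= Lambda F f th)%E.
Proof.
move=> _ M_valid M_part M_int C3.
exists (gauss_log_const R p); split; first exact: gauss_log_const_gt0.
move=> th Mth; have th_valid := M_valid th Mth; have th_int := M_int th Mth.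
split; first by apply: Hcrit_decomp => //; exact: M_part.
apply: sume_ge0 => k _; rewrite integral_ln_ratio //.
apply: le_trans (C3 k) _.
by apply: ereal_inf_lbound; exists th; split => //; exists k.
Qed.
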